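(* Let $q\ge 2$, $n\ge 1$ and $\varepsilon\in\mathbb{N}$ with $\varepsilon\le n$. Let $x\in\mathbb{Z}_q^n$ be a hidden vector, and suppose the attacker has access to an oracle $\texttt{Match}_{x,\varepsilon}$ which, on a query $y\in\mathbb{Z}_q^n$, returns $1$ if $d(x,y)\le\varepsilon$ and $0$ otherwise, and which additionally reveals the value $d(x,y)$ whenever $d(x,y)\le\varepsilon$. Then there is an adaptive query strategy that recovers $x$ using, in the worst case, $\mathcal{O}(q^{n-\varepsilon}+q\varepsilon)$ queries to $\texttt{Match}_{x,\varepsilon}$.
   Context: $\mathbb{Z}_q^n=\{0,\dots,q-1\}^n$ is equipped with the Hamming distance $d(x,y)=|\{i\in\{1,\dots,n\}: x_i\neq y_i\}|$. The attacker may choose each query adaptively based on previous oracle answers; complexity is measured as the number of oracle queries. *)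

From mathcomp Require Import all_boot.
Set Implicit Arguments. Unset Strict Implicit. Unset Printing Implicit Defensive.

Definition vec (q n : nat) := {ffun 'I_n -> 'I_q}.

Definition hamming (q n : nat) (x y : vec q n) : nat := #|[set i | x i != y i]|.

(* The oracle Match_{x,eps}: on query y, answers None (= bit 0) if d(x,y) > eps,
   and Some d(x,y) (= bit 1 together with the revealed distance) otherwise. *)
Definition match_oracle (q n eps : nat) (x : vec q n) (y : vec q n) : option nat :=
  if hamming x y <= eps then Some (hamming x y) else None.

(* Adaptive query strategies: finite decision trees. A node queries a vector and
   branches on the oracle's answer; a leaf outputs the guess. *)
Inductive strategy (T : Type) : Type :=
  | Output (x : T)
  | Query (y : T) (k : option nat -> strategy T).

Fixpoint run (T : Type) (oracle : T -> option nat) (s : strategy T) : T * nat :=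
  match s with
  | Output x => (x, 0)
  | Query y k => let r := run oracle (k (oracle y)) in (r.1, r.2.+1)
  end.

From mathcomp Require Import all_boot zify.
Set Implicit Arguments. Unset Strict Implicit. Unset Printing Implicit Defensive.

(* First query every vector that agrees with a fixed value c0 on
   the last eps coordinates: the one copying x on the first n - eps
   coordinates is within distance eps of x, so some answer is positive; call
   the first such vector y. Then fix the coordinates of y one at a time: with
   y within distance eps of x, among the q vectors obtained by changing
   coordinate i of y, the one with value x i is the unique closest to x, and
   its distance is revealed, so the oracle identifies it. This costs
   q^(n-eps) + n q queries, and n q = (n - eps) q + eps q <= q^(n-eps) + q eps. *)

Fixpoint query_seq (T : Type) (ys : seq T) (k : seq (option nat) -> strategy T) :
    strategy T :=
  match ys with
  | [::] => k [::]
  | y :: ys' => Query y (fun a => query_seq ys' (fun l => k (a :: l)))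
  end.

Lemma run_query_seq (T : Type) (O : T -> option nat) ys k :
  run O (query_seq ys k) =
  ((run O (k (map O ys))).1, (run O (k (map O ys))).2 + size ys).
Proof.
elim: ys k => [|y ys IH] k /=; first by case: (run O (k [::])) => a b; rewrite addn0.
by rewrite IH /= addnS.
Qed.

Lemma mul_leq_exp q m : 2 <= q -> m * q <= q ^ m.
Proof.
move=> q_gt1; case: m => [|m]; first by rewrite mul0n.
by rewrite expnSr leq_mul2r ltn_expl ?orbT.
Qed.

Section Hamming.
Variables q n eps : nat.
Implicit Types x y : vec q n.

Lemma match_oracle_neq_None x y :
  (match_oracle eps x y != None) = (hamming x y <= eps).
Proof. by rewrite /match_oracle; case: leqP. Qed.

Definition set_coord y (i : 'I_n) (c : 'I_q) : vec q n :=
  [ffun j => if j == i then c else y j].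

Lemma set_coord_id y i : set_coord y i (y i) = y.
Proof. by apply/ffunP => j; rewrite ffunE; case: eqVneq => [->|]. Qed.

Lemma hamming_set_coord x y i c :
  hamming x (set_coord y i c) = (x i != c) + #|[set j | x j != y j] :\ i|.
Proof.
rewrite /hamming (cardsD1 i) inE ffunE eqxx; congr (_ + _); apply: eq_card => j.
by rewrite !inE ffunE; case: eqVneq.
Qed.

Lemma hamming_set_coord_self x y i :
  hamming x (set_coord y i (x i)) <= hamming x y.
Proof.
by rewrite -{2}(set_coord_id y i) !hamming_set_coord eqxx leq_addl.
Qed.

End Hamming.

Section Padding.
Variables (q n m : nat) (c0 : 'I_q).

Definition pad (g : {ffun 'I_m -> 'I_q}) : vec q n :=
  [ffun i : 'I_n => if insub (val i) is Some j then g j else c0].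

Hypothesis m_le_n : m <= n.

Definition prefix (x : vec q n) : {ffun 'I_m -> 'I_q} :=
  [ffun j => x (widen_ord m_le_n j)].

Lemma hamming_pad_prefix (x : vec q n) : hamming x (pad (prefix x)) <= n - m.
Proof.
pose P := [set widen_ord m_le_n j | j in 'I_m].
have card_notP : #|~: P| = n - m.
  rewrite -[n in n - _]card_ord -(cardsC P) card_imset ?card_ord ?addKn //.
  by move=> j k [] /val_inj.
rewrite -card_notP; apply: subset_leq_card; apply/subsetP => i.
rewrite !inE; apply: contraNN => /imsetP [j _ ->].
rewrite !ffunE; case: insubP => [k _ /val_inj -> | ]; last by rewrite /= ltn_ord.
by rewrite ffunE.
Qed.

End Padding.

Section Recovery.
Variables (q n eps : nat) (c0 : 'I_q).

Definition answer_rank (a : option nat) : nat := if a is Some d then d else eps.+1.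

Definition answer_at (ans : seq (option nat)) (c : 'I_q) : option nat :=
  nth None ans (index c (enum 'I_q)).

Definition best_value (ans : seq (option nat)) : 'I_q :=
  [arg min_(c < c0) answer_rank (answer_at ans c)].

Fixpoint fix_coords (ls : seq 'I_n) (y : vec q n) : strategy (vec q n) :=
  match ls with
  | [::] => Output y
  | i :: ls' => query_seq [seq set_coord y i c | c <- enum 'I_q]
                  (fun ans => fix_coords ls' (set_coord y i (best_value ans)))
  end.

Definition candidates : seq (vec q n) :=
  [seq pad n c0 g | g : {ffun 'I_(n - eps) -> 'I_q}].

Definition recover : strategy (vec q n) :=
  query_seq candidates (fun ans =>
    fix_coords (enum 'I_n) (nth [ffun=> c0] candidates (find (fun a => a != None) ans))).

Variable x : vec q n.
Let O := match_oracle eps x.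

Lemma answer_rank_match_oracle y : answer_rank (O y) = minn (hamming x y) eps.+1.
Proof. by rewrite /O /match_oracle /answer_rank; case: leqP => /= h; lia. Qed.

Lemma answer_at_map y i c :
  answer_at (map O [seq set_coord y i c | c <- enum 'I_q]) c = O (set_coord y i c).
Proof.
by rewrite /answer_at -map_comp (nth_map c0) ?index_mem ?mem_enum // nth_index ?mem_enum.
Qed.

Lemma best_value_correct y i : hamming x y <= eps ->
  best_value (map O [seq set_coord y i c | c <- enum 'I_q]) = x i.
Proof.
move=> y_close; rewrite /best_value; case: arg_minnP => // c _ /(_ (x i) isT).
have := hamming_set_coord_self x y i.
rewrite !answer_at_map !answer_rank_match_oracle !hamming_set_coord eqxx.
by case: eqVneq => // _ /=; lia.
Qed.

Lemma run_fix_coords ls y : uniq ls -> hamming x y <= eps ->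
  {in [predC ls], x =1 y} -> run O (fix_coords ls y) = (x, size ls * q).
Proof.
elim: ls y => [|i ls IH] y /= => [_ _ xy | /andP [i_notin_ls ls_uniq] y_close xy].
  by congr (_, _); apply/ffunP => j; rewrite xy.
rewrite run_query_seq best_value_correct // IH //=.
- by rewrite size_map size_enum_ord mulSn addnC.
- exact: leq_trans (hamming_set_coord_self x y i) y_close.
move=> j; rewrite inE ffunE => j_notin_ls; case: eqVneq => [-> // | j_neq_i].
by apply: xy; rewrite !inE negb_or j_neq_i j_notin_ls.
Qed.

Lemma hamming_first_match : eps <= n ->
  hamming x (nth [ffun=> c0] candidates (find (fun a => a != None) (map O candidates)))
    <= eps.
Proof.
move=> eps_le_n; rewrite find_map -match_oracle_neq_None.
apply: (nth_find _ (a := preim O (fun a => a != None))); apply/hasP.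
exists (pad n c0 (prefix (leq_subr eps n) x)); first by apply: map_f; rewrite mem_enum.
rewrite /= match_oracle_neq_None.
by have := hamming_pad_prefix c0 (leq_subr eps n) x; rewrite subKn.
Qed.

Lemma run_recover : eps <= n -> run O recover = (x, q ^ (n - eps) + n * q).
Proof.
move=> eps_le_n; rewrite run_query_seq run_fix_coords ?enum_uniq ?hamming_first_match //.
  by rewrite size_enum_ord size_map -cardE card_ffun !card_ord addnC.
by move=> j; rewrite inE mem_enum.
Qed.

End Recovery.

Theorem theorem1 :
  exists C : nat, forall q n eps : nat, 2 <= q -> 1 <= n -> eps <= n ->
    exists s : strategy (vec q n), forall x : vec q n,
      (run (match_oracle eps x) s).1 = x /\
      (run (match_oracle eps x) s).2 <= C * (q ^ (n - eps) + q * eps).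
Proof.
exists 2 => q n eps q_gt1 _ eps_le_n.
have c0 : 'I_q by exists 0; apply: leq_trans q_gt1.
exists (recover n eps c0) => x; rewrite run_recover //; split => //=.
have := mul_leq_exp (n - eps) q_gt1.
have -> : n * q = (n - eps) * q + eps * q by rewrite -mulnDl subnK.
lia.
Qed.
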